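(* For each positive integer $n$, let $P_n=(n, n-1,\ldots,1)$. Then the pair $(P_n,P_n)$ is bigraphic, and every bipartite graph realizing $(P_n,P_n)$ is a mirror bipartite graph; that is, $\mathrm{Bipp}(P_n,P_n)=\mathrm{Mirr}(P_n,P_n)$.
   Context: For sequences $P,Q$ of nonnegative integers, a bipartite graph $G=(V_1\cup V_2,E)$ (with stable sets $V_1,V_2$) realizes $(P,Q)$ if the degrees of the vertices of $V_1$ are the elements of $P$ and the degrees of the vertices of $V_2$ are the elements of $Q$; $(P,Q)$ is bigraphic if such a $G$ exists. A bipartite graph $G=(V_1\cup V_2,E)$ is mirror if there is a bijection $\varphi:V_1\to V_2$ with $u\varphi(v)\in E \iff \varphi(u)v\in E$ for all $u,v\in V_1$. $\mathrm{Bipp}(P,P)$ denotes the set of bipartite graphs (up to isomorphism) realizing $(P,P)$, and $\mathrm{Mirr}(P,P)$ the set of mirror bipartite graphs (up to isomorphism) realizing $(P,P)$. *)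

From mathcomp Require Import all_boot.
Set Implicit Arguments. Unset Strict Implicit. Unset Printing Implicit Defensive.

(* A (simple) bipartite graph G = (V1 ∪ V2, E) with stable sets V1, V2 is
   given by finite vertex types V1, V2 and an adjacency relation
   E : V1 -> V2 -> bool (u ∈ V1 is adjacent to v ∈ V2 iff E u v). *)

Definition deg1 (V1 V2 : finType) (E : V1 -> V2 -> bool) (u : V1) : nat :=
  #|[set v : V2 | E u v]|.

Definition deg2 (V1 V2 : finType) (E : V1 -> V2 -> bool) (v : V2) : nat :=
  #|[set u : V1 | E u v]|.

Definition realizes (V1 V2 : finType) (E : V1 -> V2 -> bool)
  (P Q : seq nat) : Prop :=
  perm_eq [seq deg1 E u | u <- enum V1] P /\
  perm_eq [seq deg2 E v | v <- enum V2] Q.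

Definition bigraphic (P Q : seq nat) : Prop :=
  exists (V1 V2 : finType) (E : V1 -> V2 -> bool), realizes E P Q.

Definition mirror (V1 V2 : finType) (E : V1 -> V2 -> bool) : Prop :=
  exists phi : V1 -> V2, bijective phi /\
    forall u v : V1, E u (phi v) = E v (phi u).

Definition Pn (n : nat) : seq nat := rev (iota 1 n).

From mathcomp Require Import all_boot zify.
Set Implicit Arguments. Unset Strict Implicit. Unset Printing Implicit Defensive.

(* If both sides of G realize P_n, the degree functions are bijections onto
   {1, ..., n}, and G must be the Ferrers graph: u ~ v iff deg u + deg v > n.
   This is forced by peeling the degree sequence from both ends: the vertex
   of degree n - k in V1 cannot be adjacent to the k vertices of V2 whose
   adjacencies are already known to avoid it, so its n - k neighbours are
   exactly the remaining ones; dually for the vertex of degree k + 1 in V2.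
   Since the Ferrers condition is symmetric in the degrees, matching vertices
   of equal degree is a mirror bijection. Conversely the Ferrers graph on
   {0, ..., n-1} with i ~ j iff i + j + 2 > n realizes (P_n, P_n). *)

Lemma card_preim_count (V : finType) (f : V -> nat) (P : pred nat) :
  #|[set x | P (f x)]| = count P [seq f x | x <- enum V].
Proof. by rewrite cardsE cardE count_map -size_filter /enum_mem filter_predT. Qed.

Lemma count_gt_iota1 k n : count (fun i => k < i) (iota 1 n) = n - k.
Proof.
elim: n => [//|n IHn]; rewrite -[n.+1]addn1 iotaD count_cat IHn /=.
by case: (ltnP k n.+1) => /=; lia.
Qed.

Lemma count_gt_Pn k n : count (fun i => k < i) (Pn n) = n - k.
Proof. by rewrite count_rev count_gt_iota1. Qed.

Lemma uniq_Pn n : uniq (Pn n).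
Proof. by rewrite rev_uniq iota_uniq. Qed.

Lemma mem_Pn n d : (d \in Pn n) = (0 < d <= n).
Proof. by rewrite mem_rev mem_iota; lia. Qed.

Lemma perm_eq_map_bij (T : eqType) (V1 V2 : finType) (f : V1 -> T) (g : V2 -> T) :
  uniq [seq f x | x <- enum V1] ->
  perm_eq [seq f x | x <- enum V1] [seq g y | y <- enum V2] ->
  exists2 phi : V1 -> V2, bijective phi & forall x, g (phi x) = f x.
Proof.
move=> uniq_f eq_fg.
have /injectiveP inj_f : injectiveb f by [].
have /injectiveP inj_g : injectiveb g by rewrite /injectiveb /dinjectiveb -(perm_uniq eq_fg).
have ex_g x : exists y, g y == f x.
  have /mapP [y _ ->] : f x \in [seq g y | y <- enum V2].
    by rewrite -(perm_mem eq_fg) map_f ?mem_enum.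
  by exists y.
have ex_f y : exists x, f x == g y.
  have /mapP [x _ ->] : g y \in [seq f x | x <- enum V1].
    by rewrite (perm_mem eq_fg) map_f ?mem_enum.
  by exists x.
pose phi x := xchoose (ex_g x); pose psi y := xchoose (ex_f y).
have phiE x : g (phi x) = f x by apply/eqP; exact: xchooseP (ex_g x).
have psiE y : f (psi y) = g y by apply/eqP; exact: xchooseP (ex_f y).
exists phi => //; exists psi => [x | y].
  by apply: inj_f; rewrite psiE phiE.
by apply: inj_g; rewrite phiE psiE.
Qed.

Section DegreesPn.

Variables (n : nat) (V : finType) (f : V -> nat).
Hypothesis f_Pn : perm_eq [seq f x | x <- enum V] (Pn n).

Lemma card_gt_degPn k : #|[set x | k < f x]| = n - k.
Proof. by rewrite card_preim_count (permP f_Pn) count_gt_Pn. Qed.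

Lemma degPn_range x : 0 < f x <= n.
Proof. by rewrite -mem_Pn -(perm_mem f_Pn) map_f ?mem_enum. Qed.

End DegreesPn.

Section FerrersForced.

Variables (n : nat) (V1 V2 : finType) (E : V1 -> V2 -> bool).
Hypothesis E_Pn : realizes E (Pn n) (Pn n).

Local Notation a := (deg1 E).
Local Notation b := (deg2 E).

Definition ferrers_upto k :=
  forall u v, (n - k < a u) || (b v <= k) -> E u v = (n < a u + b v).

Lemma ferrers_upto0 : ferrers_upto 0.
Proof.
move=> u v; have := degPn_range E_Pn.1 u; have := degPn_range E_Pn.2 v.
by rewrite subn0 leqn0; lia.
Qed.

Variable k : nat.
Hypotheses (lt_k_n : k < n) (Ek : ferrers_upto k).

Lemma ferrers_row u : a u = n - k -> forall v, E u v = (k < b v).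
Proof.
move=> au v.
have sub : [set v | E u v] \subset [set v | k < b v].
  apply/subsetP => w; rewrite !inE ltnNge; apply: contraTN => le_bw_k.
  by rewrite Ek au ?le_bw_k ?orbT //; lia.
have eq_card : #|[set v | E u v]| = #|[set v | k < b v]|.
  by rewrite (card_gt_degPn E_Pn.2) -au.
by have := subset_cardP eq_card sub v; rewrite !inE.
Qed.

Lemma ferrers_column v : b v = k.+1 -> forall u, E u v = (n - k.+1 < a u).
Proof.
move=> bv u.
have sub : [set u | n - k.+1 < a u] \subset [set u | E u v].
  apply/subsetP => w; rewrite !inE => aw.
  have [aw_eq | aw_neq] := eqVneq (a w) (n - k).
    by rewrite ferrers_row // bv.
  by rewrite Ek bv; lia.
have eq_card : #|[set u | n - k.+1 < a u]| = b v.
  by rewrite (card_gt_degPn E_Pn.1) bv; lia.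
by have := subset_cardP eq_card sub u; rewrite !inE.
Qed.

Lemma ferrers_uptoS : ferrers_upto k.+1.
Proof.
move=> u v /orP [au | bv].
- have [au_eq | au_neq] := eqVneq (a u) (n - k).
    by rewrite ferrers_row // au_eq; lia.
  by apply: Ek; apply/orP; left; lia.
- have [bv_eq | bv_neq] := eqVneq (b v) k.+1.
    by rewrite ferrers_column // bv_eq; lia.
  by apply: Ek; apply/orP; right; lia.
Qed.

End FerrersForced.

Lemma realizes_Pn_ferrers n (V1 V2 : finType) (E : V1 -> V2 -> bool) :
  realizes E (Pn n) (Pn n) -> forall u v, E u v = (n < deg1 E u + deg2 E v).
Proof.
move=> E_Pn u v.
have all_k k : k <= n -> ferrers_upto n E k.
  elim: k => [|k IHk] lt_k_n; first exact: ferrers_upto0.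
  exact: ferrers_uptoS (IHk (ltnW lt_k_n)).
apply: (all_k n (leqnn n)).
by have /andP [_ ->] := degPn_range E_Pn.2 v; rewrite orbT.
Qed.

Lemma realizes_Pn_mirror n (V1 V2 : finType) (E : V1 -> V2 -> bool) :
  realizes E (Pn n) (Pn n) -> mirror E.
Proof.
move=> E_Pn; have [Ea Eb] := E_Pn.
have [phi phi_bij phiE] : exists2 phi : V1 -> V2, bijective phi &
    forall u, deg2 E (phi u) = deg1 E u.
  apply: perm_eq_map_bij; first by rewrite (perm_uniq Ea) uniq_Pn.
  by rewrite (perm_trans Ea) // perm_sym.
exists phi; split => // u v.
by rewrite !(realizes_Pn_ferrers E_Pn) !phiE addnC.
Qed.

Lemma map_succ_enum_ord n : [seq (val i).+1 | i <- enum 'I_n] = iota 1 n.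
Proof. by rewrite (map_comp succn val) val_enum_ord (iotaDl 1 0). Qed.

Lemma card_ferrers_ord n (i : 'I_n) :
  #|[set j : 'I_n | n < i.+1 + j.+1]| = i.+1.
Proof.
have lt_i_n : i < n := ltn_ord i.
rewrite (card_preim_count (fun j : 'I_n => (val j).+1) (fun m => n < i.+1 + m)).
rewrite map_succ_enum_ord (eq_count (a2 := fun m => n - i.+1 < m)); last by move=> m; lia.
by rewrite count_gt_iota1; lia.
Qed.

Lemma bigraphic_Pn n : bigraphic (Pn n) (Pn n).
Proof.
exists 'I_n, 'I_n, (fun i j : 'I_n => n < i.+1 + j.+1).
have deg_perm (d : 'I_n -> nat) : d =1 (fun i => (val i).+1) ->
    perm_eq [seq d i | i <- enum 'I_n] (Pn n).
  by move=> dE; rewrite (eq_map dE) map_succ_enum_ord perm_sym perm_rev.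
split; apply: deg_perm => i; rewrite -[RHS](card_ferrers_ord i) //.
by apply: eq_card => j; rewrite !inE addnC.
Qed.

Theorem lemma3 (n : nat) (hn : 0 < n) :
  bigraphic (Pn n) (Pn n) /\
  (forall (V1 V2 : finType) (E : V1 -> V2 -> bool),
     realizes E (Pn n) (Pn n) -> mirror E).
Proof.
split; first exact: bigraphic_Pn.
by move=> V1 V2 E; apply: realizes_Pn_mirror.
Qed.
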